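(* Let $G=(V,E)$ be an undirected graph (finite or infinite) and $M=M(S)$ a multiplex of $G$ generated by the simplex $S=(V_S,E_S)$. Then: (i) $G(\widetilde M)$ has a partition $F_M\neq\{\widetilde M\}$ of $\widetilde M$ into maximal ``strong'' partitive sets of $G(\widetilde M)$; (ii) if $\mathrm{rank}(M)=1$, then either $G(\widetilde M)/F_M$ is isomorphic to $S$, or $G(\widetilde M)/F_M$ is indecomposable and isomorphic to a sub-graph $G'=(V',E')$ of $G(\widetilde M)$ with $E'\subseteq M$; (iii) if $\mathrm{rank}(M)\ge 2$, then $G(\widetilde M)/F_M$ is isomorphic to $S$.
   Context: A graph $G=(V,E)$ has vertex set $V$ (possibly infinite) and edge set $E\subseteq V^2$ of ordered pairs; it is undirected if $E$ is irreflexive and symmetric, and then $ab$ denotes $\{(a,b),(b,a)\}$, with $ab\in E$ meaning $(a,b)\in E$. For $X\subseteq V$, $E(X)=\{(a,b)\in E: a,b\in X\}$ and $G(X)=(X,E(X))$. For a set $A$ of ordered pairs, $\widetilde A$ is the set of vertices $a$ such that $(a,b)\in A$ or $(b,a)\in A$ for some $b$. A set $X\subseteq W$ is a partitive set of a graph $H=(W,D)$ if for all $a,b\in X$ and $c\in W\setminus X$: $(a,c)\in D\Leftrightarrow(b,c)\in D$ and $(c,a)\in D\Leftrightarrow(c,b)\in D$; $I(H)$ is the class of partitive sets; a partitive set is trivial if it is a singleton or $W$; $H$ is indecomposable if all its partitive sets are trivial. A ``strong'' partitive set of $H$ is an $X\in I(H)$ such that for every $Y\in I(H)$ with $X\cap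 Y\neq\emptyset$, $X\subseteq Y$ or $Y\subseteq X$; $I_F(H)$ is the class of these. A maximal ``strong'' partitive set of $H$ is an element of $I_F(H)\setminus\{W\}$ maximal for inclusion in $I_F(H)\setminus\{W\}$. For a partition $P$ of $W$ into partitive sets, the quotient $H/P$ is the graph with vertex set $P$ in which distinct $X,Y$ are joined iff $(x,y)\in D$ for some, equivalently every, $x\in X,y\in Y$ (isomorphic to $H(f(P))$ for any choice function $f$ with $f(X)\in X$). Implication classes of undirected $G$: on $E$ define $(a,b)\Gamma(a',b')$ iff either $a=a'$ and $(b,b')\notin E$, or $b=b'$ and $(a,a')\notin E$; the classes of the transitive closure $\Gamma^*$ are the implication classes. For an implication class $A$, $A^{-1}=\{(b,a):(a,b)\in A\}$ and the color class (color) is $\widehat A=A\cup A^{-1}$. A simplex of rank $r\ge1$ is a complete sub-graph $S=(V_S,E_S)$ of $G$ on $r+1$ vertices whose distinct undirected edges lie in distinct color classes. The multiplex generated by $S$ is $M(S)=\bigcup\{\widehat A:\widehat A\text{ a color class},\ \widehat A\cap E_S\neq\emptyset\}$, of rank $r$; $\widetilde M$ is the set of vertices spanned by $M$. *)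

From Stdlib Require Import List Relations.
Import ListNotations.
Set Implicit Arguments.

Section Defs.

Definition partitive (W : Type) (D : W -> W -> Prop) (X : W -> Prop) : Prop :=
  forall a b c, X a -> X b -> ~ X c ->
    (D a c <-> D b c) /\ (D c a <-> D c b).

Definition strong_partitive (W : Type) (D : W -> W -> Prop) (X : W -> Prop) : Prop :=
  partitive D X /\
  forall Y, partitive D Y -> (exists z, X z /\ Y z) ->
    (forall w, X w -> Y w) \/ (forall w, Y w -> X w).

Definition max_strong_partitive (W : Type) (D : W -> W -> Prop) (X : W -> Prop) : Prop :=
  strong_partitive D X /\ ~ (forall w, X w) /\
  forall Y, strong_partitive D Y -> ~ (forall w, Y w) ->
    (forall w, X w -> Y w) -> (forall w, Y w -> X w).

Definition is_partition (W : Type) (F : (W -> Prop) -> Prop) : Prop :=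
  (forall X, F X -> exists w, X w) /\
  (forall X Y, F X -> F Y -> X <> Y -> forall w, X w -> Y w -> False) /\
  (forall w, exists X, F X /\ X w).

Definition quot_vertex (W : Type) (F : (W -> Prop) -> Prop) : Type :=
  { X : W -> Prop | F X }.

Definition quot_edge (W : Type) (D : W -> W -> Prop) (F : (W -> Prop) -> Prop)
  (X Y : quot_vertex F) : Prop :=
  X <> Y /\ exists x y, proj1_sig X x /\ proj1_sig Y y /\ D x y.

Definition indecomposable (W : Type) (D : W -> W -> Prop) : Prop :=
  forall X, partitive D X ->
    (forall w, ~ X w) \/ (exists w, forall y, X y <-> y = w) \/ (forall w, X w).

Definition graph_iso (A : Type) (RA : A -> A -> Prop) (B : Type) (RB : B -> B -> Prop)
  : Prop :=
  exists (f : A -> B) (g : B -> A),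
    (forall a, g (f a) = a) /\ (forall b, f (g b) = b) /\
    (forall a a', RA a a' <-> RB (f a) (f a')).

Variable V : Type.
Variable E : V -> V -> Prop.

Definition edgeP (p : V * V) : Prop := E (fst p) (snd p).

Definition swap (p : V * V) : V * V := (snd p, fst p).

Definition Gamma (p q : V * V) : Prop :=
  edgeP p /\ edgeP q /\
  ((fst p = fst q /\ ~ E (snd p) (snd q)) \/
   (snd p = snd q /\ ~ E (fst p) (fst q))).

Definition impl_class (A : V * V -> Prop) : Prop :=
  exists e, edgeP e /\
    forall p, A p <-> (edgeP p /\ clos_refl_trans (V * V) Gamma e p).

Definition color_class (C : V * V -> Prop) : Prop :=
  exists A, impl_class A /\ forall p, C p <-> (A p \/ A (swap p)).

(* simplex of rank r with vertex list VS (edge set E_S = all pairs of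
   distinct vertices of VS, since S is complete) *)
Definition simplex (VS : list V) (r : nat) : Prop :=
  1 <= r /\ NoDup VS /\ length VS = S r /\
  (forall a b, In a VS -> In b VS -> a <> b -> E a b) /\
  (forall a b c d, In a VS -> In b VS -> In c VS -> In d VS ->
     a <> b -> c <> d -> ~ ((a = c /\ b = d) \/ (a = d /\ b = c)) ->
     forall C, color_class C -> ~ (C (a, b) /\ C (c, d))).

Definition simplex_edge (VS : list V) (p : V * V) : Prop :=
  In (fst p) VS /\ In (snd p) VS /\ fst p <> snd p.

Definition multiplex (VS : list V) (p : V * V) : Prop :=
  exists C, color_class C /\ (exists q, simplex_edge VS q /\ C q) /\ C p.

Definition spanned (M : V * V -> Prop) (v : V) : Prop :=
  exists w, M (v, w) \/ M (w, v).

Definition induced_vertex (X : V -> Prop) : Type := { v : V | X v }.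
Definition induced_edge (X : V -> Prop) (x y : induced_vertex X) : Prop :=
  E (proj1_sig x) (proj1_sig y).

End Defs.

Arguments induced_edge {V} E X x y.
Arguments induced_vertex {V} X.
Arguments quot_edge {W} D F X Y.
Arguments quot_vertex {W} F.

(* Write p ~> q for the forcing relation Gamma*; M is the set of pairs forced by an edge of S
   and W the set of vertices it spans.

   If rank S >= 2, a third vertex of S always makes the triangle lemma applicable.  Every v in
   W then has a unique simplex vertex s with (t, s) ~> (t, v) for all other simplex vertices t,
   and vertices of different classes are adjacent.  These classes are therefore modules, any
   module meeting a class and an edge of M leaving it swallows the class, and they are exactly
   the maximal strong modules of G(W); the quotient is complete, i.e. isomorphic to S.

   If rank S = 1, M is a single colour class, so a module of G(W) containing an edge of M is all
   of W.  Forcing preserves the property "one endpoint in X \ Y, the other in Y \ X", so the union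
   of two overlapping modules free of M-edges is again free of M-edges; the blocks are the
   maximal such modules.  For an edge xy between two blocks the vertices spanned by the
   implication class of xy form a module, which cannot be M-free and, by the triangle lemma,
   cannot be all of W unless xy is in M: so edges between blocks lie in M.  A nontrivial module
   of the quotient would lift to an M-free module meeting two blocks, hence the quotient is
   indecomposable. *)

From Stdlib Require Import PeanoNat Lia List Relations Classical
  FunctionalExtensionality PropExtensionality ClassicalEpsilon.
Import ListNotations.
Set Implicit Arguments.

Section Forcing.
Variable V : Type.
Variable E : V -> V -> Prop.
Hypothesis Esym : forall a b, E a b -> E b a.

Notation forces := (clos_refl_trans (V * V) (Gamma E)).

Lemma Gamma_sym p q : Gamma E p q -> Gamma E q p.
Proof.
  intros [ep [eq [[e n] | [e n]]]]; repeat split; auto.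
  - left; split; auto.
  - right; split; auto.
Qed.

Lemma Gamma_swap p q : Gamma E p q -> Gamma E (swap p) (swap q).
Proof.
  destruct p as [a b], q as [c d]; unfold Gamma, edgeP, swap; simpl.
  intros [eab [ecd [[e n] | [e n]]]]; auto.
Qed.

Lemma Gamma_fst x y y' : E x y -> E x y' -> ~ E y y' -> Gamma E (x, y) (x, y').
Proof. unfold Gamma, edgeP; simpl; auto. Qed.

Lemma Gamma_snd x x' y : E x y -> E x' y -> ~ E x x' -> Gamma E (x, y) (x', y).
Proof. unfold Gamma, edgeP; simpl; auto. Qed.

Lemma forces_sym p q : forces p q -> forces q p.
Proof.
  induction 1; eauto using rt_step, rt_refl, rt_trans, Gamma_sym.
Qed.

Lemma forces_swap p q : forces p q -> forces (swap p) (swap q).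
Proof.
  induction 1; eauto using rt_step, rt_refl, rt_trans, Gamma_swap.
Qed.

Lemma forces_swap_pair a b c d : forces (a, b) (c, d) -> forces (b, a) (d, c).
Proof. exact (@forces_swap (a, b) (c, d)). Qed.

Lemma swap_swap (p : V * V) : swap (swap p) = p.
Proof. now destruct p. Qed.

Lemma forces_or_swap_trans e p q :
  forces e p \/ forces e (swap p) -> forces e q \/ forces e (swap q) ->
  forces p q \/ forces p (swap q).
Proof.
  intros [hp | hp] [hq | hq].
  - left; eauto using rt_trans, forces_sym.
  - right; eauto using rt_trans, forces_sym.
  - right. rewrite <- (swap_swap p). apply forces_swap; eauto using rt_trans, forces_sym.
  - left. rewrite <- (swap_swap p), <- (swap_swap q).
    apply forces_swap; eauto using rt_trans, forces_sym.
Qed.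

Lemma forces_edge p q : forces p q -> edgeP E p -> edgeP E q.
Proof.
  induction 1 as [p q [_ [eq _]] | | ]; auto.
Qed.

(* Golumbic's Triangle Lemma. *)
Lemma forces_triangle a b c : E a b -> E a c -> E b c ->
  ~ forces (b, c) (b, a) -> ~ forces (b, c) (a, c) ->
  forall p, forces (b, c) p ->
  E a (fst p) /\ E a (snd p) /\ forces (a, b) (a, fst p) /\ forces (a, c) (a, snd p).
Proof.
  intros eab eac ebc nba nac p hp.
  apply clos_rt_rtn1 in hp.
  induction hp as [|[b1 c1] [b2 c2] hg hq IH].
  - simpl; repeat split; auto using rt_refl.
  - destruct IH as [eab1 [eac1 [fb1 fc1]]]; simpl in *.
    assert (hp : forces (b, c) (b2, c2)).
    { apply rt_trans with (b1, c1); [now apply clos_rtn1_rt | now apply rt_step]. }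
    unfold Gamma, edgeP in hg; simpl in hg.
    destruct hg as [_ [e22 [[<- n] | [<- n]]]].
    + assert (eac2 : E a c2).
      { apply NNPP; intro na. apply nba.
        apply rt_trans with (b1, c2); [exact hp|].
        apply rt_trans with (b1, a); [apply rt_step, Gamma_fst; auto|].
        apply forces_sym, forces_swap_pair, fb1. }
      repeat split; auto.
      apply rt_trans with (a, c1); [exact fc1|]. apply rt_step, Gamma_fst; auto.
    + assert (eab2 : E a b2).
      { apply NNPP; intro na. apply nac.
        apply rt_trans with (b2, c1); [exact hp|].
        apply rt_trans with (a, c1); [apply rt_step, Gamma_snd; auto|].
        apply forces_sym, fc1. }
      repeat split; auto.
      apply rt_trans with (a, b1); [exact fb1|]. apply rt_step, Gamma_fst; auto.
Qed.

Lemma forces_triangle_avoid a b c : (forall v, ~ E v v) ->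
  E a b -> E a c -> E b c ->
  ~ forces (b, c) (b, a) -> ~ forces (b, c) (a, c) ->
  forall p, forces (b, c) p -> fst p <> a /\ snd p <> a.
Proof.
  intros Eirr eab eac ebc nba nac p hp.
  destruct (forces_triangle eab eac ebc nba nac hp) as [e1 [e2 _]].
  split; intros <-; eapply Eirr; eauto.
Qed.

Definition class_span (e : V * V) (u : V) : Prop :=
  exists p, forces e p /\ (fst p = u \/ snd p = u).

Lemma outside_class_span_uniform e c : edgeP E e -> ~ class_span e c ->
  forall p, forces e p -> (E c (fst p) <-> E c (fst e)) /\ (E c (snd p) <-> E c (fst e)).
Proof.
  intros he nc.
  assert (balanced : forall p, forces e p -> (E c (fst p) <-> E c (snd p))).
  { intros [a b] hp. pose proof (forces_edge hp he) as eab; unfold edgeP in eab; simpl in *.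
    split; intro h; apply NNPP; intro h'; apply nc.
    - exists (a, c); split; [|simpl; auto].
      apply rt_trans with (a, b); [exact hp|]. apply rt_step, Gamma_fst; auto.
    - exists (c, b); split; [|simpl; auto].
      apply rt_trans with (a, b); [exact hp|]. apply rt_step, Gamma_snd; auto. }
  intros p hp. pose proof (balanced p hp) as bp.
  apply clos_rt_rtn1 in hp. induction hp as [|q q' hg hq IH].
  - tauto.
  - specialize (IH (balanced q (clos_rtn1_rt _ _ _ _ hq))).
    destruct hg as [_ [_ [[e' _] | [e' _]]]]; rewrite <- e' in *; tauto.
Qed.

Lemma class_span_module e : edgeP E e -> forall a b c,
  class_span e a -> class_span e b -> ~ class_span e c -> (E a c <-> E b c).
Proof.
  intros he a b c [p [hp ha]] [q [hq hb]] nc.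
  destruct (outside_class_span_uniform he nc hp), (outside_class_span_uniform he nc hq).
  assert (E c a <-> E c (fst e)) by (destruct ha as [<- | <-]; auto).
  assert (E c b <-> E c (fst e)) by (destruct hb as [<- | <-]; auto).
  split; intro h; apply Esym; apply Esym in h; tauto.
Qed.

End Forcing.

Section Quotient.
Variable T : Type.
Variable D : T -> T -> Prop.
Variable F : (T -> Prop) -> Prop.
Hypothesis HF : is_partition F.
Hypothesis HFp : forall X, F X -> partitive D X.

Lemma quot_vertex_share {P Q : quot_vertex F} {x} :
  proj1_sig P x -> proj1_sig Q x -> P = Q.
Proof.
  intros hP hQ. apply eq_sig_hprop; [intros; apply proof_irrelevance|].
  apply NNPP; intro n.
  exact (proj1 (proj2 HF) _ _ (proj2_sig P) (proj2_sig Q) n x hP hQ).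
Qed.

Lemma quot_edge_iff {P Q : quot_vertex F} {a c} : P <> Q ->
  proj1_sig P a -> proj1_sig Q c -> (D a c <-> quot_edge D F P Q).
Proof.
  intros n ha hc. split.
  - intro h. split; [exact n | exists a, c; auto].
  - intros [_ [x [y [hx [hy hxy]]]]].
    assert (yP : ~ proj1_sig P y) by (intro h; apply n; exact (quot_vertex_share h hy)).
    assert (aQ : ~ proj1_sig Q a) by (intro h; apply n; exact (quot_vertex_share ha h)).
    apply (proj2 (HFp (proj2_sig Q) y c a hy hc aQ)).
    apply (proj1 (HFp (proj2_sig P) x a y hx ha yP)), hxy.
Qed.

Lemma quotient_partitive_union (X : quot_vertex F -> Prop) :
  partitive (quot_edge D F) X -> partitive D (fun x => exists P, X P /\ proj1_sig P x).
Proof.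
  intros hX a b c [P [xP aP]] [Q [xQ bQ]] nc.
  destruct (proj2 (proj2 HF) c) as [Xc [hXc cXc]].
  set (Rc := exist F Xc hXc : quot_vertex F).
  assert (nR : ~ X Rc) by (intro h; apply nc; exists Rc; auto).
  assert (nPR : P <> Rc) by (intros ->; auto).
  assert (nQR : Q <> Rc) by (intros ->; auto).
  destruct (hX P Q Rc xP xQ nR) as [eo ei].
  rewrite (quot_edge_iff nPR aP cXc), (quot_edge_iff nQR bQ cXc).
  rewrite (quot_edge_iff (not_eq_sym nPR) cXc aP), (quot_edge_iff (not_eq_sym nQR) cXc bQ).
  tauto.
Qed.

End Quotient.

Lemma max_strong_partition_nontrivial [T : Type] [D : T -> T -> Prop]
  [F : (T -> Prop) -> Prop] :
  (forall X, F X -> max_strong_partitive D X) ->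
  ~ ((exists X, F X /\ forall w, X w) /\ (forall X, F X -> forall w, X w)).
Proof.
  intros hF [[X [hX hall]] _]. exact (proj1 (proj2 (hF X hX)) hall).
Qed.

Section InducedModules.
Variable V : Type.
Variable E : V -> V -> Prop.
Hypothesis Esym : forall a b, E a b -> E b a.
Variable W : V -> Prop.

Notation forces := (clos_refl_trans (V * V) (Gamma E)).

(* Modules of G(W), described by sets of vertices of G that need not lie inside W. *)
Definition module_in (Y : V -> Prop) : Prop :=
  forall a b c, W a -> W b -> W c -> Y a -> Y b -> ~ Y c -> (E a c <-> E b c).

Definition restrict (Y : V -> Prop) : induced_vertex W -> Prop :=
  fun x => Y (proj1_sig x).

Definition lift (X : induced_vertex W -> Prop) (v : V) : Prop :=
  exists h : W v, X (exist _ v h).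

Lemma lift_iff X (x : induced_vertex W) : X x <-> lift X (proj1_sig x).
Proof.
  destruct x as [v h]; simpl. split.
  - intro hx; exists h; exact hx.
  - intros [h' hx]. rewrite (proof_irrelevance _ h h'). exact hx.
Qed.

Lemma restrict_partitive Y : module_in Y -> partitive (induced_edge E W) (restrict Y).
Proof.
  intros hY [a ha] [b hb] [c hc]; unfold restrict, induced_edge; simpl; intros ya yb nc.
  pose proof (hY a b c ha hb hc ya yb nc).
  split; [auto | split; intro h; apply Esym; apply Esym in h; tauto].
Qed.

Lemma lift_module X : partitive (induced_edge E W) X -> module_in (lift X).
Proof.
  intros hX a b c ha hb hc [ha' xa] [hb' xb] nc.
  assert (nc' : ~ X (exist _ c hc)) by (intro h; apply nc; exists hc; exact h).
  exact (proj1 (hX _ _ _ xa xb nc')).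
Qed.

Lemma module_in_union [X Y z] : module_in X -> module_in Y -> W z -> X z -> Y z ->
  module_in (fun v => X v \/ Y v).
Proof.
  intros hX hY hz xz yz a b c ha hb hc ya yb nc.
  assert (nX : ~ X c) by tauto. assert (nY : ~ Y c) by tauto.
  assert (E a c <-> E z c) by (destruct ya; [apply (hX a z c) | apply (hY a z c)]; auto).
  assert (E b c <-> E z c) by (destruct yb; [apply (hX b z c) | apply (hY b z c)]; auto).
  tauto.
Qed.

Lemma module_forces_closed Y p : module_in Y ->
  (forall q, forces p q -> W (fst q) /\ W (snd q)) ->
  Y (fst p) -> Y (snd p) -> forall q, forces p q -> Y (fst q) /\ Y (snd q).
Proof.
  intros hY hW y1 y2 q hq. pose proof (hW q hq) as [w1' w2'].
  apply clos_rt_rtn1 in hq. induction hq as [|q q' hg hq IH]; auto.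
  assert (fq : forces p q) by now apply clos_rtn1_rt.
  destruct (hW q fq) as [w1 w2], (IH w1 w2) as [i1 i2].
  destruct hg as [_ [e' [[e n] | [e n]]]]; unfold edgeP in e'; rewrite <- e in *.
  - split; auto. apply NNPP; intro nb. apply n, (hY _ _ _ w1 w2 w2' i1 i2 nb), e'.
  - split; auto. apply NNPP; intro nb. apply n, (hY _ _ _ w2 w1 w1' i2 i1 nb), Esym, e'.
Qed.

Definition transversal (F : (induced_vertex W -> Prop) -> Prop) (T : V -> Prop) : Prop :=
  (forall v, T v -> W v) /\
  (forall X, F X -> exists v, T v /\ lift X v) /\
  (forall X v w, F X -> T v -> T w -> lift X v -> lift X w -> v = w).

Lemma partition_transversal F : is_partition F -> exists T, transversal F T.
Proof.
  intro HF.
  assert (rep : forall P : quot_vertex F, {x | proj1_sig P x}).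
  { intro P. apply constructive_indefinite_description, (proj1 HF), proj2_sig. }
  assert (block : forall X (hX : F X) P, lift X (proj1_sig (proj1_sig (rep P))) ->
            P = exist F X hX).
  { intros X hX P hl.
    exact (quot_vertex_share HF (Q := exist F X hX) (proj2_sig (rep P))
                             (proj2 (lift_iff X _) hl)). }
  exists (fun v => exists P, proj1_sig (proj1_sig (rep P)) = v). split; [|split].
  - intros v [P <-]. exact (proj2_sig (proj1_sig (rep P))).
  - intros X hX. exists (proj1_sig (proj1_sig (rep (exist F X hX)))). split.
    + eexists; reflexivity.
    + exact (proj1 (lift_iff _ _) (proj2_sig (rep (exist F X hX)))).
  - intros X v w hX [P <-] [Q <-] hP hQ.
    now rewrite (block X hX P hP), (block X hX Q hQ).
Qed.

Lemma quotient_iso_transversal F T : (forall v, ~ E v v) ->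
  is_partition F -> (forall X, F X -> partitive (induced_edge E W) X) ->
  transversal F T ->
  graph_iso (quot_edge (induced_edge E W) F) (induced_edge E T).
Proof.
  intros Eirr HF HFp [TW [Tex Tuniq]].
  assert (fP : forall P : quot_vertex F, {v | T v /\ lift (proj1_sig P) v}).
  { intro P. apply constructive_indefinite_description, Tex, proj2_sig. }
  assert (gt : forall t : induced_vertex T,
            {P : quot_vertex F | proj1_sig P (exist _ _ (TW _ (proj2_sig t)))}).
  { intro t. apply constructive_indefinite_description.
    destruct (proj2 (proj2 HF) (exist _ _ (TW _ (proj2_sig t)))) as [X [hX x]].
    now exists (exist F X hX). }
  assert (fP_in : forall P, proj1_sig P (exist _ _ (TW _ (proj1 (proj2_sig (fP P)))))).
  { intro P. apply (lift_iff (proj1_sig P) (exist _ _ _)), (proj2 (proj2_sig (fP P))). }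
  exists (fun P => exist T _ (proj1 (proj2_sig (fP P)))), (fun t => proj1_sig (gt t)).
  split; [|split].
  - intro P. eapply (quot_vertex_share HF); [exact (proj2_sig (gt _)) | apply fP_in].
  - intros [v hv]. apply eq_sig_hprop; [intros; apply proof_irrelevance|]. simpl.
    destruct (gt (exist T v hv)) as [P hP]; simpl in *.
    apply (Tuniq (proj1_sig P) _ _ (proj2_sig P) (proj1 (proj2_sig (fP P))) hv).
    + exact (proj2 (proj2_sig (fP P))).
    + exact (proj1 (lift_iff _ _) hP).
  - intros P Q. unfold induced_edge; simpl.
    destruct (classic (P = Q)) as [<- | n].
    + split; [intros [n _]; congruence | intro h; exfalso; exact (Eirr _ h)].
    + symmetry; exact (quot_edge_iff HF HFp n (fP_in P) (fP_in Q)).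
Qed.

End InducedModules.

Arguments restrict {V} W Y x.

Section Multiplex.
Variable V : Type.
Variable E : V -> V -> Prop.
Hypothesis Esym : forall a b, E a b -> E b a.
Variable VS : list V.
Variable r : nat.
Hypothesis HS : simplex E VS r.

Notation forces := (clos_refl_trans (V * V) (Gamma E)).
Notation W := (spanned (multiplex E VS)).

Definition in_multiplex (p : V * V) : Prop :=
  exists a b, In a VS /\ In b VS /\ a <> b /\ forces (a, b) p.

Lemma simplex_adj a b : In a VS -> In b VS -> a <> b -> E a b.
Proof. exact (proj1 (proj2 (proj2 (proj2 HS))) a b). Qed.

Definition color_of (e : V * V) (p : V * V) : Prop :=
  (edgeP E p /\ forces e p) \/ (edgeP E (swap p) /\ forces e (swap p)).

Lemma color_of_color_class e : edgeP E e -> color_class E (color_of e).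
Proof.
  intro he. exists (fun p => edgeP E p /\ forces e p). split; [|reflexivity].
  exists e. split; [exact he | reflexivity].
Qed.

Lemma simplex_unforced a b c d : In a VS -> In b VS -> In c VS -> In d VS ->
  a <> b -> c <> d -> ~ ((a = c /\ b = d) \/ (a = d /\ b = c)) ->
  ~ forces (a, b) (c, d).
Proof.
  intros ha hb hc hd nab ncd nn h.
  apply (proj2 (proj2 (proj2 (proj2 HS))) a b c d ha hb hc hd nab ncd nn (color_of (a, b))).
  - apply color_of_color_class, simplex_adj; auto.
  - split; left; split; [apply simplex_adj; auto | apply rt_refl |
                         apply simplex_adj; auto | exact h].
Qed.

Lemma multiplex_iff p : multiplex E VS p <-> in_multiplex p.
Proof.
  split.
  - intros [C [[A [[e [he hA]] hC]] [[[a b] [[ha [hb nab]] Cq]] Cp]]]; simpl in *.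
    assert (col : forall x, C x -> forces e x \/ forces e (swap x)).
    { intros x hx. apply hC in hx as [hx | hx]; apply hA in hx; tauto. }
    destruct (forces_or_swap_trans Esym (col _ Cq) (col _ Cp)) as [h | h].
    + exists a, b; auto.
    + exists b, a. repeat split; auto.
      rewrite <- (swap_swap p). exact (forces_swap Esym h).
  - intros [a' [b' [ha [hb [nab h]]]]].
    assert (eab : E a' b') by (apply simplex_adj; auto).
    exists (color_of (a', b')). split; [apply color_of_color_class, eab|]. split.
    + exists (a', b'). split; [repeat split; auto | left; split; [exact eab | apply rt_refl]].
    + left; split; [exact (forces_edge h eab) | exact h].
Qed.

Lemma in_multiplex_edge p : in_multiplex p -> edgeP E p.
Proof. intros [a [b [ha [hb [n h]]]]]. exact (forces_edge h (simplex_adj ha hb n)). Qed.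

Lemma in_multiplex_swap p : in_multiplex p -> in_multiplex (swap p).
Proof.
  intros [a [b [ha [hb [n h]]]]].
  exists b, a. repeat split; auto. exact (forces_swap Esym h).
Qed.

Lemma in_multiplex_forces p q : in_multiplex p -> forces p q -> in_multiplex q.
Proof.
  intros [a [b [ha [hb [n h]]]]] h'. exists a, b. repeat split; eauto using rt_trans.
Qed.

Lemma spanned_iff v : W v <-> exists w, in_multiplex (v, w).
Proof.
  split.
  - intros [w [h | h]]; apply multiplex_iff in h; exists w; [exact h|].
    exact (in_multiplex_swap h).
  - intros [w h]. exists w. left. apply multiplex_iff, h.
Qed.

Lemma in_multiplex_spanned p : in_multiplex p -> W (fst p) /\ W (snd p).
Proof.
  destruct p as [a b]; intro h. split; apply spanned_iff.
  - exists b; exact h.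
  - exists a; exact (in_multiplex_swap h).
Qed.

Lemma module_multiplex_closed Y p : module_in E W Y -> in_multiplex p ->
  Y (fst p) -> Y (snd p) -> forall q, forces p q -> Y (fst q) /\ Y (snd q).
Proof.
  intros hY hp. apply (module_forces_closed Esym hY).
  intros q hq. exact (in_multiplex_spanned (in_multiplex_forces hp hq)).
Qed.

Lemma simplex_two_vertices : exists x y l, VS = x :: y :: l /\ x <> y.
Proof.
  destruct HS as [hr [hnd [hl _]]].
  destruct VS as [|x [|y l]]; simpl in hl; try lia.
  exists x, y, l. split; [reflexivity|].
  inversion hnd as [|? ? hx]. intros <-. apply hx; simpl; auto.
Qed.

Lemma simplex_spanned [s] : In s VS -> W s.
Proof.
  intro hs. destruct simplex_two_vertices as [x [y [l [eV nxy]]]].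
  assert (hx : In x VS) by (rewrite eV; simpl; auto).
  assert (hy : In y VS) by (rewrite eV; simpl; auto).
  apply spanned_iff.
  destruct (classic (s = x)) as [-> | ne].
  - exists y, x, y. repeat split; auto using rt_refl.
  - exists x, s, x. repeat split; auto using rt_refl.
Qed.

End Multiplex.

Section RankAtLeastTwo.
Variable V : Type.
Variable E : V -> V -> Prop.
Hypothesis Esym : forall a b, E a b -> E b a.
Variable VS : list V.
Variable r : nat.
Hypothesis HS : simplex E VS r.
Hypothesis Hr : 2 <= r.

Notation forces := (clos_refl_trans (V * V) (Gamma E)).
Notation W := (spanned (multiplex E VS)).

Lemma third_vertex s t : exists k, In k VS /\ k <> s /\ k <> t.
Proof.
  destruct HS as [_ [hnd [hl _]]].
  destruct VS as [|x [|y [|z l]]]; simpl in hl; try lia.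
  inversion hnd as [|? ? hx hnd']. inversion hnd' as [|? ? hy _].
  assert (nxy : x <> y) by (intros <-; apply hx; simpl; auto).
  assert (nxz : x <> z) by (intros <-; apply hx; simpl; auto).
  assert (nyz : y <> z) by (intros <-; apply hy; simpl; auto).
  destruct (classic (x <> s /\ x <> t)) as [h | hx']; [exists x; simpl; auto|].
  destruct (classic (y <> s /\ y <> t)) as [h | hy']; [exists y; simpl; auto|].
  exists z. split; [simpl; auto|].
  assert (x = s \/ x = t) by (apply NNPP; tauto).
  assert (y = s \/ y = t) by (apply NNPP; tauto).
  split; intros ->; intuition congruence.
Qed.

Lemma simplex_triangle a b c p : In a VS -> In b VS -> In c VS ->
  a <> b -> a <> c -> b <> c -> forces (b, c) p ->
  E a (fst p) /\ E a (snd p) /\ forces (a, b) (a, fst p) /\ forces (a, c) (a, snd p).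
Proof.
  intros ha hb hc nab nac nbc.
  apply (forces_triangle Esym); try apply (simplex_adj HS); auto;
    apply (simplex_unforced HS); auto; intros [[] | []]; congruence.
Qed.

(* The block of F_M indexed by the simplex vertex [s]. *)
Definition vertex_block (s v : V) : Prop :=
  forall t, In t VS -> t <> s -> forces (t, s) (t, v).

Lemma vertex_block_refl s : vertex_block s s.
Proof. intros t _ _; apply rt_refl. Qed.

Lemma vertex_block_of_forced s t v w : In s VS -> In t VS -> s <> t ->
  forces (s, t) (v, w) -> vertex_block s v.
Proof.
  intros hs ht nst h u hu nus.
  destruct (classic (u = t)) as [-> | nut].
  - destruct (third_vertex s t) as [k [hk [nks nkt]]].
    destruct (simplex_triangle hk hs ht nks nkt nst h) as [_ [_ [hkv _]]].
    apply (forces_swap_pair Esym) in hkv.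
    exact (proj1 (proj2 (proj2 (simplex_triangle ht hs hk nus (not_eq_sym nkt)
                                  (not_eq_sym nks) hkv)))).
  - exact (proj1 (proj2 (proj2 (simplex_triangle hu hs ht nus nut nst h)))).
Qed.

Lemma vertex_block_unique s t v : In s VS -> In t VS ->
  vertex_block s v -> vertex_block t v -> s = t.
Proof.
  intros hs ht hsv htv. apply NNPP; intro nst.
  destruct (third_vertex s t) as [k [hk [nks nkt]]].
  apply (simplex_unforced HS (a := k) (b := s) (c := k) (d := t)); auto.
  - intros [[] | []]; congruence.
  - apply rt_trans with (k, v); [apply hsv | apply (forces_sym Esym), htv]; auto.
Qed.

Lemma vertex_block_cross s t v u : In s VS -> In t VS -> s <> t ->
  vertex_block s v -> vertex_block t u -> E v u /\ forces (s, t) (v, u).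
Proof.
  intros hs ht nst hv hu.
  destruct (third_vertex s t) as [k [hk [nks nkt]]].
  assert (fts : forces (t, s) (t, v)) by auto.
  assert (fks : forces (k, s) (k, v)) by auto.
  assert (fkt : forces (k, t) (k, u)) by auto.
  assert (evt : E v t).
  { apply Esym, (forces_edge fts), (simplex_adj HS); auto. }
  assert (evk : E v k).
  { apply Esym, (forces_edge fks), (simplex_adj HS); auto. }
  assert (n1 : ~ forces (t, k) (t, v)).
  { intro h. apply (simplex_unforced HS (a := t) (b := k) (c := t) (d := s)); auto.
    - intros [[] | []]; congruence.
    - apply rt_trans with (t, v); [exact h | apply (forces_sym Esym), fts]. }
  assert (n2 : ~ forces (t, k) (v, k)).
  { intro h. apply (simplex_unforced HS (a := t) (b := k) (c := s) (d := k)); auto.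
    - intros [[] | []]; congruence.
    - apply rt_trans with (v, k); [exact h|].
      apply (forces_sym Esym), (forces_swap_pair Esym), fks. }
  destruct (forces_triangle Esym evt evk (simplex_adj HS ht hk (not_eq_sym nkt)) n1 n2
              (forces_swap_pair Esym fkt)) as [evu [_ [fvu _]]].
  split; [exact evu|].
  apply rt_trans with (v, t); [apply (forces_swap_pair Esym), fts | exact fvu].
Qed.

Lemma spanned_vertex_block v : W v -> exists s, In s VS /\ vertex_block s v.
Proof.
  intro hv. apply (spanned_iff Esym HS) in hv as [w [a [b [ha [hb [n h]]]]]].
  exists a. split; [exact ha | exact (vertex_block_of_forced ha hb n h)].
Qed.

Lemma vertex_blocks_union_module (P : V -> Prop) :
  module_in E W (fun v => exists s, In s VS /\ P s /\ vertex_block s v).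
Proof.
  intros a b c _ _ hc [s [hs [ps sa]]] [t [ht [pt tb]]] nc.
  destruct (spanned_vertex_block hc) as [k [hk kc]].
  assert (nsk : s <> k) by (intros <-; apply nc; eauto).
  assert (ntk : t <> k) by (intros <-; apply nc; eauto).
  pose proof (proj1 (vertex_block_cross hs hk nsk sa kc)).
  pose proof (proj1 (vertex_block_cross ht hk ntk tb kc)).
  tauto.
Qed.

Lemma vertex_block_module [s] : In s VS -> module_in E W (vertex_block s).
Proof.
  intros hs a b c ha hb hc sa sb nc.
  apply (vertex_blocks_union_module (eq s)); eauto.
  intros [k [_ [<- kc]]]; auto.
Qed.

Definition vertex_blocks (X : induced_vertex W -> Prop) : Prop :=
  exists s, In s VS /\ X = restrict W (vertex_block s).

Lemma vertex_blocks_partition : is_partition vertex_blocks.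
Proof.
  split; [|split].
  - intros X [s [hs ->]]. exists (exist _ s (simplex_spanned Esym HS hs)). apply vertex_block_refl.
  - intros X Y [s [hs ->]] [t [ht ->]] n w sw tw.
    apply n. now rewrite (vertex_block_unique hs ht sw tw).
  - intros [w hw]. destruct (spanned_vertex_block hw) as [s [hs h]].
    exists (restrict W (vertex_block s)). split; [exists s; auto | exact h].
Qed.

Lemma vertex_block_strong [s] : In s VS ->
  strong_partitive (induced_edge E W) (restrict W (vertex_block s)).
Proof.
  intro hs. split; [exact (restrict_partitive Esym (vertex_block_module hs))|].
  intros Y hY [z [zs zY]].
  destruct (classic (forall x, restrict W (vertex_block s) x -> Y x)) as [h | h];
    [left; exact h | right].
  apply not_all_ex_not in h as [x hx]. apply imply_to_and in hx as [xs nxY].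
  intros w wY. apply NNPP; intro nws. apply nxY.
  destruct (spanned_vertex_block (proj2_sig w)) as [t [ht wt]].
  assert (nst : s <> t) by (intros <-; auto).
  destruct (vertex_block_cross hs ht nst zs wt) as [_ fz].
  destruct (vertex_block_cross hs ht nst xs wt) as [_ fx].
  apply lift_iff.
  refine (proj1 (module_multiplex_closed Esym HS (lift_module hY) (p := (proj1_sig z, proj1_sig w))
                   _ _ _ (q := (proj1_sig x, proj1_sig w)) _)).
  - exists s, t; auto.
  - exact (proj1 (lift_iff _ _) zY).
  - exact (proj1 (lift_iff _ _) wY).
  - apply rt_trans with (s, t); [apply (forces_sym Esym), fz | exact fx].
Qed.

Lemma vertex_block_maximal [s Y] : In s VS ->
  strong_partitive (induced_edge E W) Y -> ~ (forall w, Y w) ->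
  (forall w, restrict W (vertex_block s) w -> Y w) ->
  forall w, Y w -> restrict W (vertex_block s) w.
Proof.
  intros hs [hYp hYs] nall hsub w wY. apply NNPP; intro nws.
  destruct (spanned_vertex_block (proj2_sig w)) as [t [ht wt]].
  assert (nst : s <> t) by (intros <-; auto).
  assert (sY : lift Y s).
  { apply (lift_iff Y (exist _ s (simplex_spanned Esym HS hs))), hsub, vertex_block_refl. }
  apply nall; intro x. apply lift_iff.
  destruct (spanned_vertex_block (proj2_sig x)) as [u [hu xu]].
  destruct (classic (u = s)) as [-> | nus]; [apply lift_iff, hsub, xu|].
  destruct (classic (u = t)) as [-> | nut].
  - refine (proj2 (module_multiplex_closed Esym HS (lift_module hYp) (p := (s, proj1_sig w))
                     _ sY _ (q := (s, proj1_sig x)) _)).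
    + exists s, t. repeat split; auto.
    + exact (proj1 (lift_iff _ _) wY).
    + apply rt_trans with (s, t); [apply (forces_sym Esym), wt | apply xu]; auto.
  - set (U := fun v => exists k, In k VS /\ (k = s \/ k = u) /\ vertex_block k v).
    assert (hU : partitive (induced_edge E W) (restrict W U)).
    { exact (restrict_partitive Esym (vertex_blocks_union_module _)). }
    set (s' := exist W s (simplex_spanned Esym HS hs)).
    assert (sYU : Y s' /\ restrict W U s').
    { split; [exact (hsub s' (vertex_block_refl (s := s)))|].
      exists s. split; [exact hs | split; [left; reflexivity | apply vertex_block_refl]]. }
    destruct (hYs _ hU (ex_intro _ s' sYU)) as [h | h].
    + exfalso. destruct (h w wY) as [k [hk [ek kw]]].
      pose proof (vertex_block_unique hk ht kw wt). destruct ek; congruence.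
    + apply lift_iff, h. exists u; auto.
Qed.

Lemma vertex_blocks_max_strong X : vertex_blocks X ->
  max_strong_partitive (induced_edge E W) X.
Proof.
  intros [s [hs ->]]. split; [|split].
  - exact (vertex_block_strong hs).
  - intro hall. destruct (third_vertex s s) as [t [ht [nts _]]].
    apply nts, (vertex_block_unique ht hs (vertex_block_refl (s := t))).
    exact (hall (exist _ t (simplex_spanned Esym HS ht))).
  - intros Y hY nall hsub. exact (vertex_block_maximal hs hY nall hsub).
Qed.

Lemma vertex_blocks_quotient_iso : (forall v, ~ E v v) ->
  graph_iso (quot_edge (induced_edge E W) vertex_blocks) (induced_edge E (fun v => In v VS)).
Proof.
  intro Eirr. apply (quotient_iso_transversal Eirr vertex_blocks_partition).
  - intros X hX. exact (proj1 (proj1 (vertex_blocks_max_strong hX))).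
  - split; [|split].
    + exact (simplex_spanned Esym HS).
    + intros X [s [hs ->]]. exists s. split; [exact hs|].
      exists (simplex_spanned Esym HS hs). apply vertex_block_refl.
    + intros X v w [s [hs ->]] hv hw [hv' sv] [hw' sw].
      rewrite (vertex_block_unique hv hs (vertex_block_refl (s := v)) sv).
      exact (vertex_block_unique hs hw sw (vertex_block_refl (s := w))).
Qed.

End RankAtLeastTwo.

Lemma simplex_rank_one (V : Type) (E : V -> V -> Prop) (VS : list V) :
  simplex E VS 1 -> exists s0 s1, VS = [s0; s1].
Proof.
  intros [_ [_ [hl _]]].
  destruct VS as [|s0 [|s1 [|]]]; simpl in hl; try lia. now exists s0, s1.
Qed.

Section RankOne.
Variable V : Type.
Variable E : V -> V -> Prop.
Hypothesis Eirr : forall a, ~ E a a.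
Hypothesis Esym : forall a b, E a b -> E b a.
Variable VS : list V.
Hypothesis HS : simplex E VS 1.
Variables s0 s1 : V.
Hypothesis HV : VS = [s0; s1].

Notation forces := (clos_refl_trans (V * V) (Gamma E)).
Notation W := (spanned (multiplex E VS)).
Notation M := (in_multiplex E VS).

Lemma rank_one_base : M (s0, s1).
Proof.
  destruct HS as [_ [hnd _]]. rewrite HV in hnd |- *.
  inversion hnd as [|? ? h0]. exists s0, s1.
  repeat split; simpl; auto using rt_refl.
  intros <-; apply h0; simpl; auto.
Qed.

(* In rank one, M is a single colour class. *)
Lemma multiplex_forces_or_swap p q : M p -> M q -> forces p q \/ forces p (swap q).
Proof.
  assert (base : forall x, M x -> forces (s0, s1) x \/ forces (s0, s1) (swap x)).
  { intros x [a [b [ha [hb [nab h]]]]]. rewrite HV in ha, hb; simpl in ha, hb.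
    destruct ha as [<- | [<- | []]], hb as [<- | [<- | []]]; try congruence.
    - left; exact h.
    - right. rewrite <- (swap_swap x). exact (forces_swap Esym h). }
  intros hp hq. exact (forces_or_swap_trans Esym (base p hp) (base q hq)).
Qed.

Lemma module_full Y p : module_in E W Y -> M p -> Y (fst p) -> Y (snd p) ->
  forall v, W v -> Y v.
Proof.
  intros hY hp y1 y2 v hv. apply (spanned_iff Esym HS) in hv as [w hw].
  destruct (multiplex_forces_or_swap hp hw) as [h | h];
    apply (module_multiplex_closed Esym HS hY hp y1 y2) in h; tauto.
Qed.

Definition M_free (Y : V -> Prop) : Prop := forall a b, Y a -> Y b -> ~ M (a, b).

Lemma module_full_or_M_free Y : module_in E W Y -> (forall v, W v -> Y v) \/ M_free Y.
Proof.
  intro hY. destruct (classic (exists a b, Y a /\ Y b /\ M (a, b))) as [[a [b [ya [yb h]]]] | n].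
  - left. exact (module_full hY h ya yb).
  - right. intros a b ya yb h. apply n; eauto.
Qed.

Definition separates (X Y : V -> Prop) (q : V * V) : Prop :=
  (X (fst q) /\ ~ Y (fst q) /\ Y (snd q) /\ ~ X (snd q)) \/
  (Y (fst q) /\ ~ X (fst q) /\ X (snd q) /\ ~ Y (snd q)).

Lemma separated_step X Y z u v w : module_in E W X -> module_in E W Y ->
  W z -> X z -> Y z -> W u -> W v -> W w ->
  X u -> ~ Y u -> Y v -> ~ X v -> E u v -> E u w -> ~ E v w -> Y w /\ ~ X w.
Proof.
  intros hX hY hz xz yz hu hv hw xu yu yv xv euv euw nvw.
  assert (nxw : ~ X w) by (intro xw; apply nvw, Esym, (hX u w v hu hw hv xu xw xv), euv).
  split; [|exact nxw]. apply NNPP; intro yw.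
  apply nvw, (hY v z w hv hz hw yv yz yw), (hX u z w hu hz hw xu xz nxw), euw.
Qed.

Lemma separates_forces X Y z p : module_in E W X -> module_in E W Y ->
  W z -> X z -> Y z -> M p -> separates X Y p ->
  forall q, forces p q -> separates X Y q.
Proof.
  intros hX hY hz xz yz hp sp q hq. apply clos_rt_rtn1 in hq.
  induction hq as [|q q' hg hq IH]; auto.
  assert (Mq : M q) by (apply in_multiplex_forces with p; auto; now apply clos_rtn1_rt).
  assert (Mq' : M q') by exact (in_multiplex_forces Mq (rt_step _ _ _ _ hg)).
  destruct (in_multiplex_spanned Esym HS Mq) as [w1 w2].
  destruct (in_multiplex_spanned Esym HS Mq') as [w1' w2'].
  pose proof (in_multiplex_edge HS Mq) as e. pose proof (in_multiplex_edge HS Mq') as e'.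
  destruct q as [q1 q2], q' as [q1' q2']; unfold separates, edgeP in *; simpl in *.
  unfold Gamma in hg; simpl in hg. destruct hg as [_ [_ [[<- n] | [<- n]]]].
  - destruct IH as [[i1 [i2 [i3 i4]]] | [i1 [i2 [i3 i4]]]].
    + left. destruct (separated_step hX hY hz xz yz w1 w2 w2' i1 i2 i3 i4 e e' n). tauto.
    + right. destruct (separated_step hY hX hz yz xz w1 w2 w2' i1 i2 i3 i4 e e' n). tauto.
  - destruct IH as [[i1 [i2 [i3 i4]]] | [i1 [i2 [i3 i4]]]].
    + left. destruct (separated_step hY hX hz yz xz w2 w1 w1' i3 i4 i1 i2
                        (Esym e) (Esym e') n). tauto.
    + right. destruct (separated_step hX hY hz xz yz w2 w1 w1' i3 i4 i1 i2
                         (Esym e) (Esym e') n). tauto.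
Qed.

Lemma M_free_union [X Y z] : module_in E W X -> module_in E W Y -> M_free X -> M_free Y ->
  W z -> X z -> Y z -> M_free (fun v => X v \/ Y v).
Proof.
  intros hX hY fX fY hz xz yz a b ya yb hab.
  assert (sab : separates X Y (a, b)).
  { assert (~ (X a /\ X b)) by (intros [xa xb]; exact (fX a b xa xb hab)).
    assert (~ (Y a /\ Y b)) by (intros [y1 y2]; exact (fY a b y1 y2 hab)).
    unfold separates; simpl.
    destruct (classic (X a)), (classic (Y a)), (classic (X b)), (classic (Y b)); tauto. }
  destruct (proj1 (spanned_iff Esym HS z) hz) as [w hw].
  destruct (multiplex_forces_or_swap hab hw) as [h | h];
    apply (separates_forces hX hY hz xz yz hab sab) in h;
    unfold separates in h; simpl in h; tauto.
Qed.

(* The block of [w] in F_M. *)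
Definition free_block (w u : V) : Prop :=
  exists Y, module_in E W Y /\ M_free Y /\ Y w /\ Y u.

Lemma free_block_refl w : free_block w w.
Proof.
  exists (eq w). split; [|split; [|split; reflexivity]].
  - intros a b c _ _ _ <- <- _. reflexivity.
  - intros a b <- <- h. exact (Eirr (in_multiplex_edge HS h)).
Qed.

Lemma free_block_max [w Y] : module_in E W Y -> M_free Y -> Y w ->
  forall u, Y u -> free_block w u.
Proof. intros; exists Y; auto. Qed.

Lemma free_block_module [w] : W w -> module_in E W (free_block w).
Proof.
  intros hw a b c ha hb hc [Y1 [m1 [f1 [y1w y1a]]]] [Y2 [m2 [f2 [y2w y2b]]]] nc.
  assert (n1 : ~ Y1 c) by (intro h; apply nc; exists Y1; auto).
  assert (n2 : ~ Y2 c) by (intro h; apply nc; exists Y2; auto).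
  pose proof (m1 a w c ha hw hc y1a y1w n1). pose proof (m2 b w c hb hw hc y2b y2w n2).
  tauto.
Qed.

Lemma free_block_M_free [w] : W w -> M_free (free_block w).
Proof.
  intros hw a b [Y1 [m1 [f1 [y1w y1a]]]] [Y2 [m2 [f2 [y2w y2b]]]].
  apply (M_free_union m1 m2 f1 f2 hw y1w y2w); auto.
Qed.

Lemma free_block_restrict_eq w u : W w -> W u -> free_block w u ->
  restrict W (free_block u) = restrict W (free_block w).
Proof.
  intros hw hu h.
  assert (sub : forall v, free_block w v -> free_block u v).
  { apply (free_block_max (free_block_module hw) (free_block_M_free hw) h). }
  assert (wu : free_block u w) by apply sub, free_block_refl.
  apply functional_extensionality; intro x; apply propositional_extensionality.
  split; [apply (free_block_max (free_block_module hu) (free_block_M_free hu) wu) | apply sub].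
Qed.

Definition free_blocks (X : induced_vertex W -> Prop) : Prop :=
  exists w, W w /\ X = restrict W (free_block w).

Lemma free_blocks_member [X x] : free_blocks X -> X x ->
  X = restrict W (free_block (proj1_sig x)).
Proof.
  intros [w [hw ->]] hx. symmetry. exact (free_block_restrict_eq hw (proj2_sig x) hx).
Qed.

Lemma free_blocks_partition : is_partition free_blocks.
Proof.
  split; [|split].
  - intros X [w [hw ->]]. exists (exist _ w hw). apply free_block_refl.
  - intros X Y hX hY n x xX xY. apply n.
    now rewrite (free_blocks_member hX xX), (free_blocks_member hY xY).
  - intros [w hw]. exists (restrict W (free_block w)).
    split; [exists w; auto | apply free_block_refl].
Qed.

Lemma free_block_strong [w] : W w ->
  strong_partitive (induced_edge E W) (restrict W (free_block w)).
Proof.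
  intro hw. split; [exact (restrict_partitive Esym (free_block_module hw))|].
  intros Y hY [z [zw zY]].
  destruct (module_full_or_M_free (lift_module hY)) as [hall | hfree].
  - left. intros x _. apply lift_iff, hall, proj2_sig.
  - right. intros x xY.
    apply (lift_iff Y z) in zY. apply (lift_iff Y x) in xY.
    pose proof (module_in_union (free_block_module hw) (lift_module hY) (proj2_sig z) zw zY)
      as hU.
    pose proof (M_free_union (free_block_module hw) (lift_module hY) (free_block_M_free hw)
                  hfree (proj2_sig z) zw zY) as fU.
    exact (free_block_max hU fU (or_introl (free_block_refl w)) _ (or_intror xY)).
Qed.

Lemma free_block_maximal [w Y] : W w -> partitive (induced_edge E W) Y -> ~ (forall x, Y x) ->
  (forall x, restrict W (free_block w) x -> Y x) -> forall x, Y x -> restrict W (free_block w) x.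
Proof.
  intros hw hY nall hsub x xY.
  destruct (module_full_or_M_free (lift_module hY)) as [hall | hfree].
  - exfalso. apply nall; intro v. apply lift_iff, hall, proj2_sig.
  - apply (free_block_max (lift_module hY) hfree).
    + apply (lift_iff Y (exist _ w hw)), hsub, free_block_refl.
    + apply lift_iff, xY.
Qed.

Lemma free_blocks_max_strong X : free_blocks X -> max_strong_partitive (induced_edge E W) X.
Proof.
  intros [w [hw ->]]. split; [exact (free_block_strong hw) | split].
  - intro hall. destruct (in_multiplex_spanned Esym HS rank_one_base) as [w0 w1].
    exact (free_block_M_free hw (hall (exist _ s0 w0)) (hall (exist _ s1 w1)) rank_one_base).
  - intros Y [hY _] nall hsub. exact (free_block_maximal hw hY nall hsub).
Qed.

Lemma class_span_misses x y : W x -> W y -> E x y -> ~ M (x, y) ->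
  exists u, W u /\ ~ class_span E (x, y) u.
Proof.
  intros hx hy exy nxy. apply (spanned_iff Esym HS) in hx as [z xz].
  destruct (in_multiplex_spanned Esym HS xz) as [_ hz].
  pose proof (in_multiplex_edge HS xz) as exz; unfold edgeP in exz; simpl in *.
  assert (eyz : E y z).
  { apply NNPP; intro n. apply nxy, (in_multiplex_forces xz), rt_step, Gamma_fst; auto. }
  assert (yz : M (y, z)).
  { apply NNPP; intro nyz. apply (spanned_iff Esym HS) in hy as [w yw].
    assert (n1 : ~ forces (x, z) (x, y)) by (intro h; exact (nxy (in_multiplex_forces xz h))).
    assert (n2 : ~ forces (x, z) (y, z)) by (intro h; exact (nyz (in_multiplex_forces xz h))).
    destruct (multiplex_forces_or_swap xz yw) as [h | h];
      destruct (forces_triangle_avoid Esym Eirr (Esym exy) eyz exz n1 n2 h); auto. }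
  exists z. split; [exact hz|]. intros [p [hp hzp]].
  assert (n1 : ~ forces (x, y) (x, z)).
  { intro h. exact (nxy (in_multiplex_forces xz (forces_sym Esym h))). }
  assert (n2 : ~ forces (x, y) (z, y)).
  { intro h. exact (nxy (in_multiplex_forces (in_multiplex_swap Esym yz) (forces_sym Esym h))). }
  destruct (forces_triangle_avoid Esym Eirr (Esym exz) (Esym eyz) exy n1 n2 hp).
  destruct hzp; auto.
Qed.

Lemma cross_edge_in_multiplex x y : W x -> W y -> E x y -> ~ free_block x y -> M (x, y).
Proof.
  intros hx hy exy nxy. apply NNPP; intro nM.
  assert (hspan : module_in E W (class_span E (x, y))).
  { intros a b c _ _ _. apply (class_span_module Esym (e := (x, y)) exy). }
  destruct (module_full_or_M_free hspan) as [hall | hfree].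
  - destruct (class_span_misses hx hy exy nM) as [u [hu nu]]. exact (nu (hall u hu)).
  - apply nxy, (free_block_max hspan hfree); exists (x, y); split; simpl; auto using rt_refl.
Qed.

Lemma free_blocks_partitive X : free_blocks X -> partitive (induced_edge E W) X.
Proof. intro hX. exact (proj1 (proj1 (free_blocks_max_strong hX))). Qed.

Lemma free_blocks_quotient_module_full (X : quot_vertex free_blocks -> Prop) P1 P2 :
  partitive (quot_edge (induced_edge E W) free_blocks) X ->
  X P1 -> X P2 -> P1 <> P2 -> forall Q, X Q.
Proof.
  intros hX x1 x2 n12 Q. apply NNPP; intro nQ.
  set (U := fun x => exists P, X P /\ proj1_sig P x).
  assert (hU : module_in E W (lift U)).
  { apply lift_module, (quotient_partitive_union free_blocks_partition free_blocks_partitive hX). }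
  destruct (module_full_or_M_free hU) as [hall | hfree].
  - destruct (proj1 free_blocks_partition _ (proj2_sig Q)) as [q hq].
    destruct (proj2 (lift_iff U q) (hall _ (proj2_sig q))) as [P [xP hP]].
    apply nQ. rewrite <- (quot_vertex_share free_blocks_partition hP hq). exact xP.
  - destruct (proj1 free_blocks_partition _ (proj2_sig P1)) as [u1 h1].
    destruct (proj1 free_blocks_partition _ (proj2_sig P2)) as [u2 h2].
    assert (u12 : free_block (proj1_sig u1) (proj1_sig u2)).
    { apply (free_block_max hU hfree); apply lift_iff; [exists P1 | exists P2]; auto. }
    apply n12, (quot_vertex_share free_blocks_partition (x := u2)); [|exact h2].
    rewrite (free_blocks_member (proj2_sig P1) h1). exact u12.
Qed.

Lemma free_blocks_indecomposable : indecomposable (quot_edge (induced_edge E W) free_blocks).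
Proof.
  intros X hX.
  destruct (classic (exists P, X P)) as [[P xP] | none]; [right | left; intros P xP; eauto].
  destruct (classic (exists Q, X Q /\ Q <> P)) as [[Q [xQ nQP]] | single].
  - right. exact (free_blocks_quotient_module_full hX xQ xP nQP).
  - left. exists P. intro Q. split; [intro xQ; apply NNPP; eauto | intros ->; exact xP].
Qed.

Lemma free_blocks_quotient_subgraph :
  exists (V' : V -> Prop) (E' : V -> V -> Prop),
    (forall v, V' v -> W v) /\
    (forall x y, E' x y -> V' x /\ V' y /\ E x y) /\
    (forall x y, E' x y -> multiplex E VS (x, y)) /\
    graph_iso (quot_edge (induced_edge E W) free_blocks)
              (fun x y : induced_vertex V' => E' (proj1_sig x) (proj1_sig y)).
Proof.
  destruct (partition_transversal free_blocks_partition) as [T hT].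
  destruct (quotient_iso_transversal Eirr free_blocks_partition free_blocks_partitive hT)
    as [f [g [gf [fg hf]]]].
  destruct hT as [TW [_ Tuniq]].
  exists T, (fun x y => T x /\ T y /\ E x y).
  split; [exact TW|]. split; [auto|]. split.
  - intros x y [tx [ty exy]].
    apply (multiplex_iff Esym HS), cross_edge_in_multiplex; auto. intro hxy.
    assert (exy' : x = y).
    { apply (Tuniq (restrict W (free_block x))); auto.
      - exists x; auto.
      - exists (TW x tx). apply free_block_refl.
      - exists (TW y ty). exact hxy. }
    rewrite <- exy' in exy. exact (Eirr exy).
  - exists f, g. split; [exact gf|]. split; [exact fg|].
    intros P Q. rewrite hf. unfold induced_edge.
    pose proof (proj2_sig (f P)). pose proof (proj2_sig (f Q)). tauto.
Qed.

End RankOne.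

Theorem theorem4p4 (V : Type) (E : V -> V -> Prop)
  (Hirr : forall a, ~ E a a) (Hsym : forall a b, E a b -> E b a)
  (VS : list V) (r : nat) (HS : simplex E VS r) :
  exists F : (induced_vertex (spanned (multiplex E VS)) -> Prop) -> Prop,
    (* (i) *)
    is_partition F /\
    (forall X, F X -> max_strong_partitive (induced_edge E (spanned (multiplex E VS))) X) /\
    ~ ((exists X, F X /\ forall w, X w) /\ (forall X, F X -> forall w, X w)) /\
    (* (ii) *)
    (r = 1 ->
       graph_iso (quot_edge (induced_edge E (spanned (multiplex E VS))) F)
                 (induced_edge E (fun v => In v VS))
       \/
       (indecomposable (quot_edge (induced_edge E (spanned (multiplex E VS))) F) /\
        exists (V' : V -> Prop) (E' : V -> V -> Prop),
          (forall v, V' v -> spanned (multiplex E VS) v) /\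
          (forall x y, E' x y -> V' x /\ V' y /\ E x y) /\
          (forall x y, E' x y -> multiplex E VS (x, y)) /\
          graph_iso (quot_edge (induced_edge E (spanned (multiplex E VS))) F)
                    (fun x y : induced_vertex V' => E' (proj1_sig x) (proj1_sig y)))) /\
    (* (iii) *)
    (2 <= r ->
       graph_iso (quot_edge (induced_edge E (spanned (multiplex E VS))) F)
                 (induced_edge E (fun v => In v VS))).
Proof.
  destruct (Nat.eq_dec r 1) as [-> | ne].
  - destruct (simplex_rank_one HS) as [s0 [s1 HV]].
    pose proof (free_blocks_max_strong Hirr Hsym HS HV) as hmax.
    exists (@free_blocks _ E VS).
    split; [exact (free_blocks_partition Hirr Hsym HS HV) |].
    split; [exact hmax |].
    split; [exact (max_strong_partition_nontrivial hmax) |].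
    split; [|lia]. intros _. right.
    split; [exact (free_blocks_indecomposable Hirr Hsym HS HV) |].
    exact (free_blocks_quotient_subgraph Hirr Hsym HS HV).
  - assert (Hr : 2 <= r) by (destruct HS; lia).
    exists (@vertex_blocks _ E VS).
    split; [exact (vertex_blocks_partition Hsym HS Hr) |].
    split; [exact (vertex_blocks_max_strong Hsym HS Hr) |].
    split; [exact (max_strong_partition_nontrivial (vertex_blocks_max_strong Hsym HS Hr)) |].
    split; [lia |]. intros _. exact (vertex_blocks_quotient_iso Hsym HS Hr Hirr).
Qed.
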